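(* For $i=1,\dots,n$ ($n\ge 2$) let $X_i$ be a finite set with $|X_i|=m_i$ and let $P_i$ be an irreducible stochastic matrix on $X_i$ in detailed balance with a strictly positive probability measure $\pi_i$, where $P_i$ is symmetric (i.e. $\pi_i$ is uniform) for every $i\ge 2$. Let $p^0_1,\dots,p^0_n>0$ sum to $1$ and let $$P=\sum_{i=1}^np^0_i\,(I_1\otimes\cdots\otimes I_{i-1}\otimes P_i\otimes J_{i+1}\otimes\cdots\otimes J_n)$$ (the nested product). For each $i$ let $L(X_i)=\bigoplus_{k=0}^{r_i}W^i_k$ be the eigenspace decomposition of $P_i$, with $W^i_k$ of eigenvalue $\lambda^i_k$, $\lambda^i_0=1$ and $W^i_0$ the constants. Then each of the following subspaces of $L(X_1\times\cdots\times X_n)\cong L(X_1)\otimes\cdots\otimes L(X_n)$ consists of eigenvectors of $P$ with the stated eigenvalue, and $L(X_1\times\cdots\times X_n)$ is their direct sum: (i) $L(X_1)\otimes\cdots\otimes L(X_{n-1})\otimes W^n_{k_n}$, $k_n=1,\dots,r_n$, with eigenvalue $p^0_n\lambda^n_{k_n}$ and dimension $m_1\cdots m_{n-1}\dim W^n_{k_n}$; (ii) $L(X_1)\otimes\cdots\otimes L(X_j)\otimes W^{j+1}_{k_{j+1}}\otimes W^{j+2}_0\otimes\cdots\otimes W^n_0$, for $j=1,\dots,n-2$ and $k_{j+1}=1,\dots,r_{j+1}$, with eigenvalue $p^0_{j+1}\lambda^{j+1}_{k_{j+1}}+p^0_{j+2}+\cdots+p^0_n$ and dimension $m_1\cdots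 m_j\dim W^{j+1}_{k_{j+1}}$; (iii) $W^1_{k_1}\otimes W^2_0\otimes\cdots\otimes W^n_0$, for $k_1=0,1,\dots,r_1$, with eigenvalue $p^0_1\lambda^1_{k_1}+p^0_2+\cdots+p^0_n$ and dimension $\dim W^1_{k_1}$.
   Context: $I_i$ is the identity matrix on $X_i$ and $J_i$ the $m_i\times m_i$ matrix with all entries $1/m_i$; explicitly $p(x,y)=\sum_{i=1}^np^0_i(\prod_{j<i}\delta(x_j,y_j))p_i(x_i,y_i)/\prod_{j>i}m_j$. Operators act on functions by $(Pf)(x)=\sum_yp(x,y)f(y)$; $(f_1\otimes\cdots\otimes f_n)(x)=\prod_if_i(x_i)$. Detailed balance: $\pi_i(x)p_i(x,y)=\pi_i(y)p_i(y,x)$. *)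

From HB Require Import structures.
From mathcomp Require Import all_boot all_order all_algebra.
Set Implicit Arguments. Unset Strict Implicit. Unset Printing Implicit Defensive.
Import Order.TTheory GRing.Theory Num.Theory.
Local Open Scope ring_scope.

Section Defs.
Variable R : realFieldType.

Definition L (X : finType) := {ffun X -> R^o}.

Definition kop (X : finType) (p : X -> X -> R) (f : L X) : L X :=
  [ffun x => \sum_y p x y * f y].

Definition kopE (X : finType) (p : X -> X -> R) : 'End(L X) := linfun (kop p).

Definition eigsp (X : finType) (p : X -> X -> R) (a : R) : {vspace L X} :=
  passmx.leigenspace (kopE p) a.

Definition stochastic (X : finType) (p : X -> X -> R) :=
  (forall x y, 0 <= p x y) /\ (forall x, \sum_y p x y = 1).

Definition irreducible (X : finType) (p : X -> X -> R) :=
  forall x y, connect [rel a b | 0 < p a b] x y.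

Definition reversible_pos (X : finType) (p : X -> X -> R) :=
  exists pi : X -> R, (forall x, 0 < pi x) /\ (\sum_x pi x = 1) /\
    (forall x y, pi x * p x y = pi y * p y x).

Definition symmetric_kernel (X : finType) (p : X -> X -> R) :=
  forall x y, p x y = p y x.

Variables (n : nat) (X : 'I_n -> finType).

Definition prodX := {dffun forall i : 'I_n, X i}.

Definition tens (f : forall i, L (X i)) : L prodX :=
  [ffun x : prodX => \prod_i f i (x i)].

(* tensor product V_1 (x) ... (x) V_n of subspaces: span of the pure tensors
   built from bases of the V_i *)
Definition tensv (V : forall i, {vspace L (X i)}) : {vspace L prodX} :=
  <<[seq tens (fun i => tnth (vbasis (V i)) (s i))
     | s : {dffun forall i : 'I_n, 'I_(\dim (V i))}]>>%VS.

Definition nested_kernel (p0 : 'I_n -> R) (p : forall i, X i -> X i -> R)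
  (x y : prodX) : R :=
  \sum_i p0 i * (\prod_(j < n | (j < i)%N) (x j == y j)%:R) * p i (x i) (y i)
     / \prod_(j < n | (i < j)%N) #|X j|%:R.

End Defs.

From HB Require Import structures.
From mathcomp Require Import all_boot all_order all_algebra ring.
Set Implicit Arguments. Unset Strict Implicit. Unset Printing Implicit Defensive.
Import Order.TTheory GRing.Theory Num.Theory.
Local Open Scope ring_scope.

(* On a pure tensor g_1 (x) ... (x) g_n, the i-th summand of P acts as the
   identity on the factors before i, as P_i on factor i and as the averaging J
   on the factors after i.  Suppose g_j is an eigenvector of P_j for lambda, the
   factors after j are constant and, if j > 1, g_j has zero sum (P_j is
   symmetric, so its eigenvectors for lambda <> 1 are orthogonal to the
   constants).  Then the summands i < j vanish, the summand j multiplies the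
   tensor by p_j lambda and each summand i > j by p_i: every block consists of
   eigenvectors.  Splitting the factors one at a time along the eigenspaces
   shows that the blocks span L(X_1 x ... x X_n).  By the maximum principle the
   harmonic functions of an irreducible chain are constant, so dim W^i_0 = 1;
   hence each block has at most the stated dimension, and these dimensions add
   up to m_1 ... m_n by telescoping.  So all the bounds are equalities and the
   sum is direct. *)

Lemma big_dffun_distr (R : comPzSemiRingType) (I : finType) (T_ : I -> finType)
    (h : forall i, T_ i -> R) :
  \sum_(t : {dffun forall i, T_ i}) \prod_i h i (t i) = \prod_i \sum_(x : T_ i) h i x.
Proof.
pose h_ i := [ffun x : T_ i => h i x].
transitivity (\sum_(t : fprod T_) \prod_(i in I) h_ i (t i)).
  rewrite (reindex (@dffun_of_fprod I T_)); last exact/onW_bij/dffun_of_fprod_bij.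
  by apply: eq_bigr => t _; apply: eq_bigr => i _; rewrite /dffun_of_fprod !ffunE.
rewrite big_fprod.
under [RHS]eq_bigr => i _ do rewrite (big_tag (fun i x => h i x)).
rewrite bigA_distr_big_dep; apply: eq_bigr => g _; apply: eq_bigr => i _.
by rewrite /untag; case: (g i) => j t /=; case: eqP => // e; rewrite ffunE.
Qed.

Lemma big_ord_ltS (T : Type) (idx : T) (op : Monoid.com_law idx) (n J : nat)
    (ltJn : (J < n)%N) (F : 'I_n -> T) :
  \big[op/idx]_(j : 'I_n | (j < J.+1)%N) F j =
  op (F (Ordinal ltJn)) (\big[op/idx]_(j : 'I_n | (j < J)%N) F j).
Proof.
rewrite (bigD1 (Ordinal ltJn)) //=; congr (op _ _); apply: eq_bigl => j.
by rewrite -val_eqE /= ltnS; case: ltngtP.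
Qed.

Lemma sum_prefix_prod_telescope (n : nat) (m : 'I_n -> nat) :
  (forall i, 0 < m i)%N -> (0 < n)%N ->
  (\sum_(j < n) (\prod_(i < n | (i < j)%N) m i) * (m j - (j != 0 :> nat)))%N =
  (\prod_(i < n) m i)%N.
Proof.
move=> m_gt0 n_gt0.
have prefix J (ltJn : (J < n)%N) :
    (\sum_(j < n | (j < J.+1)%N) (\prod_(i < n | (i < j)%N) m i) * (m j - (j != 0 :> nat)))%N
    = (\prod_(i < n | (i < J.+1)%N) m i)%N.
  elim: J ltJn => [|J IH] ltJn.
    by rewrite !big_ord_ltS !big_pred0 //= subn0 muln1 mul1n addn0.
  rewrite big_ord_ltS [RHS]big_ord_ltS IH ?(ltnW ltJn) //= subn1.
  set P := (\prod_(i < n | (i < J.+1)%N) m i)%N.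
  by rewrite -{2}(muln1 P) -mulnDr addn1 prednK ?m_gt0 // mulnC.
have ltn1n : (n.-1 < n)%N by rewrite prednK.
have := prefix _ ltn1n; rewrite prednK // => eq_prefix.
have all_lt : (fun j : 'I_n => (j < n)%N) =1 xpredT by move=> j; exact: ltn_ord.
by rewrite (eq_bigl _ _ all_lt) (eq_bigl _ _ all_lt) in eq_prefix.
Qed.

Lemma sum_neq_subn (I : finType) (i0 : I) (F : I -> nat) :
  (\sum_(i | i != i0) F i = \sum_i F i - F i0)%N.
Proof. by rewrite [in RHS](bigD1 i0) //= addKn. Qed.

Lemma prod_if_lt_eq (n : nat) (t : 'I_n) (a : 'I_n -> nat) (d : nat) :
  (\prod_(i : 'I_n) (if i < t then a i else if i == t then d else 1) =
   (\prod_(i : 'I_n | i < t) a i) * d)%N.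
Proof.
rewrite (bigD1 t) //= ltnn eqxx mulnC [in RHS]big_mkcond [in RHS](bigD1 t) //= ltnn mul1n.
by congr (_ * _); apply: eq_bigr => i ne_it; rewrite (negPf ne_it); case: ifP.
Qed.

Lemma directv_sum_dim_bound (K : fieldType) (vT : vectType K) (I : finType)
    (P : pred I) (V : I -> {vspace vT}) (b : I -> nat) :
  (forall i, P i -> \dim (V i) <= b i)%N ->
  (\sum_(i | P i) V i)%VS = fullv -> (\sum_(i | P i) b i)%N = \dim {:vT} ->
  directv (\sum_(i | P i) V i) /\ (forall i, P i -> \dim (V i) = b i).
Proof.
move=> Vb sumV sumb.
have [le_sum eq_sum] := leqif_sum (fun i Pi => leqif_eq (Vb i Pi)).
have sum_eq : (\sum_(i | P i) \dim (V i) = \sum_(i | P i) b i)%N.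
  by apply/eqP; rewrite eqn_leq le_sum sumb -sumV dimv_leq_sum.
split; first by rewrite directvEgeq /= sumV sum_eq sumb.
by move/eqP: sum_eq; rewrite eq_sum => /forall_inP eq_dim i /eq_dim/eqP.
Qed.

Section LinearEigenspaces.
Variables (K : fieldType) (vT : vectType K) (f : 'End(vT)).

Lemma mem_leigenspace a v : (v \in passmx.leigenspace f a) = (f v == a *: v).
Proof. by rewrite memv_ker add_lfunE opp_lfunE scale_lfunE id_lfunE subr_eq0. Qed.

Lemma leigenvectors_sum_eq0 (I : finType) (a : I -> K) : injective a ->
  forall (S : {set I}) (v : I -> vT), (forall i, i \in S -> f (v i) = a i *: v i) ->
  \sum_(i in S) v i = 0 -> forall i, i \in S -> v i = 0.
Proof.
move=> a_inj S; have [m] := ubnP #|S|.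
elim: m S => // m IH S ltSm v fv sumv0 i Si.
have fvS k : k \in S :\ i -> f ((a k - a i) *: v k) = a k *: ((a k - a i) *: v k).
  by rewrite in_setD1 => /andP[_ Sk]; rewrite linearZ /= fv // scalerA mulrC -scalerA.
(* applying f - a i kills v i and rescales the other components *)
have sum_shift0 : \sum_(k in S :\ i) (a k - a i) *: v k = 0.
  have : \sum_(k in S) (a k - a i) *: v k = 0.
    transitivity (f (\sum_(k in S) v k) - a i *: \sum_(k in S) v k).
      rewrite linear_sum scaler_sumr -sumrB.
      by apply: eq_bigr => k Sk; rewrite scalerBl -fv.
    by rewrite sumv0 linear0 scaler0 subr0.
  by rewrite (big_setD1 i) //= subrr scale0r add0r.
have ltSim : (#|S :\ i| < m)%N by rewrite (cardsD1 i S) Si add1n ltnS in ltSm.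
have v0 k : k \in S :\ i -> v k = 0.
  move=> Sik; have /eqP := IH _ ltSim _ fvS sum_shift0 k Sik.
  rewrite scaler_eq0 subr_eq0 (inj_eq a_inj).
  by move: Sik; rewrite in_setD1 => /andP[/negPf -> _] /eqP.
by move: sumv0; rewrite (big_setD1 i) //= big1 ?addr0.
Qed.

Lemma directv_leigenspace (I : finType) (a : I -> K) :
  injective a -> directv (\sum_i passmx.leigenspace f (a i)).
Proof.
move=> a_inj; apply/directv_sum_independent => v fv sumv0 i _.
apply: (leigenvectors_sum_eq0 a_inj (S := [set: I])) => //.
  by move=> k _; apply/eqP; rewrite -mem_leigenspace fv.
by under eq_bigl do rewrite inE.
Qed.

End LinearEigenspaces.

Lemma kop_is_linear (R : realFieldType) (X : finType) (p : X -> X -> R) : linear (kop p).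
Proof.
move=> a f g; apply/ffunP => x; rewrite !ffunE /= scaler_sumr -big_split /=.
by apply: eq_bigr => y _; rewrite !ffunE mulrDr mulrCA.
Qed.

HB.instance Definition _ (R : realFieldType) (X : finType) (p : X -> X -> R) :=
  GRing.isLinear.Build R (L R X) (L R X) _ (kop p) (kop_is_linear p).

Section KernelOperator.
Variables (R : realFieldType) (X : finType).
Implicit Types (p : X -> X -> R) (f : L R X).

Lemma dim_L : \dim {: L R X} = #|X|.
Proof. by rewrite dimvf /dim /= muln1. Qed.

Lemma card_gt0_vspace_neq0 (U : {vspace L R X}) : U != 0%VS -> (0 < #|X|)%N.
Proof.
move=> U0; rewrite -dim_L lt0n dimv_eq0.
by apply: contraNneq U0 => full0; rewrite -subv0 -full0 subvf.
Qed.

Lemma mem_eigsp p a f : (f \in eigsp p a) = (kop p f == a *: f).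
Proof. by rewrite mem_leigenspace lfunE. Qed.

Lemma directv_eigsp p (I : finType) (a : I -> R) :
  injective a -> directv (\sum_i eigsp p (a i)).
Proof. exact: directv_leigenspace. Qed.

Lemma kop_const p c : stochastic p -> kop p [ffun=> c] = [ffun=> c].
Proof.
case=> _ p1; apply/ffunP => x; rewrite !ffunE.
by under eq_bigr do rewrite ffunE; rewrite -big_distrl /= p1 mul1r.
Qed.

Lemma harmonic_max_step p (g : X -> R) M x y :
  stochastic p -> (forall z, g z <= M) -> \sum_z p x z * g z = g x ->
  g x = M -> 0 < p x y -> g y = M.
Proof.
move=> [p_ge0 p1] gM harm gxM pxy.
have /psumr_eq0P sum0 : \sum_z p x z * (M - g z) = 0.
  under eq_bigr do rewrite mulrBr.
  by rewrite sumrB -big_distrl /= p1 mul1r harm gxM subrr.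
have /eqP : p x y * (M - g y) = 0.
  by apply: sum0 => // z _; rewrite mulr_ge0 ?subr_ge0.
by rewrite mulf_eq0 gt_eqF //= subr_eq0 => /eqP <-.
Qed.

(* maximum principle: the maximum of f spreads along the positive transitions *)
Lemma eigsp1_const p f : stochastic p -> irreducible p ->
  f \in eigsp p 1 -> forall x y, f x = f y.
Proof.
move=> sp ip; rewrite mem_eigsp scale1r => /eqP Pf x y.
have harm z : \sum_y p z y * f y = f z by rewrite -{2}Pf ffunE.
have [x0 _ fx0_max] := @arg_maxP _ R X x xpredT f isT.
have {}fx0_max y' : f y' <= f x0 by exact: fx0_max.
suff max_all u : f u = f x0 by rewrite !max_all.
have /connectP [s path_s ->] := ip x0 u.
elim: s x0 fx0_max path_s {Pf} => [|z s IH] x1 fx1_max //= /andP[px1z path_s].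
have fz : f z = f x1 := harmonic_max_step sp fx1_max (harm x1) erefl px1z.
by rewrite (IH z) // => v; rewrite fz.
Qed.

Lemma eigsp1_line p : stochastic p -> irreducible p -> eigsp p 1 = <[[ffun=> 1] : L R X]>%VS.
Proof.
move=> sp ip; apply/vspaceP => f; apply/idP/idP => [f1 | /vlineP[c ->]].
  case: (pickP (xpredT : pred X)) => [x0 _ | X0]; last first.
    by rewrite (_ : f = 0) ?mem0v //; apply/ffunP => x; have := X0 x.
  have -> : f = f x0 *: [ffun=> 1].
    apply/ffunP => y; rewrite !ffunE -[_ *: _]/(f x0 * 1) mulr1.
    exact: eigsp1_const sp ip f1 y x0.
  by rewrite memvZ ?memv_line.
by rewrite memvZ // mem_eigsp kop_const // scale1r.
Qed.

Lemma dim_eigsp1 p : stochastic p -> irreducible p -> (0 < #|X|)%N ->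
  \dim (eigsp p 1) = 1%N.
Proof.
move=> sp ip /card_gt0P[x0 _]; rewrite eigsp1_line // dim_vline.
by apply/eqP; rewrite eqb1; apply/eqP => /ffunP/(_ x0); rewrite !ffunE; exact/eqP/oner_neq0.
Qed.

Lemma sum_eigsp_eq0 p a f : stochastic p -> symmetric_kernel p -> a != 1 ->
  f \in eigsp p a -> \sum_x f x = 0.
Proof.
move=> [_ p1] psym a1; rewrite mem_eigsp => /eqP Pf.
have : a * \sum_x f x = \sum_x f x.
  rewrite mulr_sumr; transitivity (\sum_x kop p f x).
    by apply: eq_bigr => x _; rewrite Pf ffunE.
  under eq_bigr do rewrite ffunE.
  rewrite exchange_big /=; apply: eq_bigr => y _.
  by rewrite -big_distrl /= (eq_bigr (p y)) ?p1 ?mul1r // => x _; rewrite psym.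
move/eqP; rewrite -subr_eq0 -{2}(mul1r (\sum_x f x)) -mulrBl mulf_eq0.
by rewrite subr_eq0 (negPf a1) => /eqP.
Qed.

End KernelOperator.

Section Tensors.
Variables (R : realFieldType) (n : nat) (X : 'I_n -> finType).

Lemma dim_L_prodX : \dim {: L R (prodX X)} = (\prod_i #|X i|)%N.
Proof. by rewrite dimvf /dim /= muln1 card_dep_ffun foldrE big_image. Qed.

Lemma memv_tens (V : forall i, {vspace L R (X i)}) (g : forall i, L R (X i)) :
  (forall i, g i \in V i) -> tens g \in tensv V.
Proof.
move=> gV.
pose c i (t : 'I_(\dim (V i))) := coord (vbasis (V i)) t (g i).
pose b i (t : 'I_(\dim (V i))) := tnth (vbasis (V i)) t.
have -> : tens g = \sum_(s : {dffun forall i, 'I_(\dim (V i))})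
    (\prod_i c i (s i)) *: tens (fun i => b i (s i)).
  apply/ffunP => x; rewrite ffunE sum_ffunE.
  transitivity (\prod_i \sum_(t : 'I_(\dim (V i))) c i t * b i t (x i)).
    apply: eq_bigr => i _; rewrite {1}(coord_vbasis (gV i)) sum_ffunE.
    by apply: eq_bigr => t _; rewrite /b (tnth_nth 0) !ffunE.
  rewrite -(big_dffun_distr (fun i t => c i t * b i t (x i))).
  by apply: eq_bigr => s _; rewrite !ffunE big_split.
apply: rpred_sum => s _; apply/rpredZ/memv_span.
by apply/mapP; exists s; rewrite ?mem_enum.
Qed.

Lemma dim_tensv_leq (V : forall i, {vspace L R (X i)}) :
  (\dim (tensv V) <= \prod_i \dim (V i))%N.
Proof.
apply: leq_trans (dim_span _) _.
rewrite size_map -cardE card_dep_ffun foldrE big_image /=.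
by under eq_bigr do rewrite card_ord.
Qed.

Lemma tens_sum_factor (g : forall i, L R (X i)) (j : 'I_n) (I : finType)
    (w : I -> L R (X j)) :
  g j = \sum_k w k -> tens g = \sum_k tens (dfwith g (w k)).
Proof.
move=> gj; apply/ffunP => x.
rewrite ffunE sum_ffunE [LHS](bigD1 j) //= gj sum_ffunE big_distrl.
apply: eq_bigr => k _; rewrite ffunE [RHS](bigD1 j) //= dfwith_in; congr (_ * _).
by apply: eq_bigr => i ij; rewrite dfwith_out // eq_sym.
Qed.

Lemma tens_delta_expansion (f : L R (prodX X)) :
  f = \sum_(x : prodX X) f x *: tens (fun i => [ffun t => (x i == t)%:R]).
Proof.
apply/ffunP => y; rewrite sum_ffunE (bigD1 y) //= big1 => [|x xy].
  rewrite !ffunE big1 ?addr0 => [|i _]; last by rewrite ffunE eqxx.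
  by rewrite -[_ *: _]/(f y * 1) mulr1.
rewrite !ffunE; have [i xyi] : exists i, x i != y i.
  apply/existsP; apply: contraNT xy => /existsPn eq_xy.
  by apply/eqP/ffunP => i; apply/eqP; exact: negbNE (eq_xy i).
by rewrite (bigD1 i) //= ffunE (negPf xyi) mul0r -[_ *: _]/(f x * 0) mulr0.
Qed.

End Tensors.

Section NestedKernel.
Local Unset Implicit Arguments.
Variables (R : realFieldType) (n : nat) (X : 'I_n -> finType).
Variables (p0 : 'I_n -> R) (p : forall i, X i -> X i -> R).

Definition tail_size (i : 'I_n) : R := \prod_(j < n | (i < j)%N) #|X j|%:R.

Lemma sum_delta_mull (T : finType) (a : T) (f : T -> R) :
  \sum_t (a == t)%:R * f t = f a.
Proof.
rewrite (bigD1 a) //= eqxx mul1r big1 ?addr0 // => t ta.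
by rewrite eq_sym (negPf ta) mul0r.
Qed.

Definition summand_tens (g : forall i, L R (X i)) (i : 'I_n) (x : prodX X) : R :=
  \prod_(j < n) (if (j < i)%N then g j (x j)
                 else if j == i then kop (p j) (g j) (x j) else \sum_t g j t).

Lemma kop_nested_tens (g : forall i, L R (X i)) (x : prodX X) :
  kop (nested_kernel p0 p) (tens g) x = \sum_i p0 i / tail_size i * summand_tens g i x.
Proof.
rewrite ffunE.
pose H (i j : 'I_n) (t : X j) := (if (j < i)%N then (x j == t)%:R else 1) *
   (if j == i then p j (x j) t else 1) * g j t.
transitivity (\sum_i p0 i / tail_size i * \sum_(y : prodX X) \prod_j H i j (y j)).
  under eq_bigr => y _ do rewrite /nested_kernel big_distrl /=.
  rewrite exchange_big /=; apply: eq_bigr => i _.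
  rewrite big_distrr /=; apply: eq_bigr => y _.
  rewrite ffunE /H !big_split /= -!big_mkcond /= (big_pred1_eq _ i) /tail_size.
  ring.
apply: eq_bigr => i _; congr (_ * _).
rewrite (big_dffun_distr (fun j => H i j)); apply: eq_bigr => j _.
rewrite /H; case: ltnP => ji.
  rewrite (_ : (j == i) = false); last by apply/negbTE; rewrite neq_ltn ji.
  by under eq_bigr do rewrite mulr1; rewrite sum_delta_mull.
case: eqP => [_|_]; last by apply: eq_bigr => t _; rewrite !mul1r.
by rewrite ffunE; apply: eq_bigr => t _; rewrite mul1r.
Qed.

Lemma prod_tail_size (i : 'I_n) (c : R) :
  \prod_(j < n) (if (j < i)%N then 1 else if j == i then c else #|X j|%:R) =
  c * tail_size i.
Proof.
rewrite (bigD1 i) //= ltnn eqxx; congr (_ * _).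
rewrite /tail_size [RHS]big_mkcond /= [RHS](bigD1 i) //= ltnn mul1r.
apply: eq_bigr => j ji; rewrite (negPf ji); case: ltngtP => // eq_ji.
by move: ji; rewrite (val_inj eq_ji) eqxx.
Qed.

Section PureTensorEigen.
Implicit Types (i j : 'I_n) (x : prodX X).
Variables (g : forall i, L R (X i)) (j0 : 'I_n) (a : R).
Hypothesis p_stoch : forall i, stochastic (p i).
Hypothesis p_irr : forall i, irreducible (p i).
Hypothesis X_gt0 : forall i, (0 < #|X i|)%N.
Hypothesis g_j0 : g j0 \in eigsp (p j0) a.
Hypothesis sum_g_j0 : (0 < j0)%N -> \sum_t g j0 t = 0.
Hypothesis g_gt : forall i : 'I_n, (j0 < i)%N -> g i \in eigsp (p i) 1.

Lemma summand_tens_lt i x : (i < j0)%N -> summand_tens g i x = 0.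
Proof.
move=> lt_ij0; have ne_j0i : (j0 == i) = false by rewrite -val_eqE gtn_eqF.
rewrite /summand_tens (bigD1 j0) //= (ltnNge j0 i) (ltnW lt_ij0) ne_j0i.
by rewrite sum_g_j0 ?mul0r // (leq_ltn_trans _ lt_ij0).
Qed.

Lemma summand_tens_ge i x : (j0 <= i)%N ->
  summand_tens g i x = (if i == j0 then a else 1) * tail_size i * tens g x.
Proof.
move=> le_j0i; pose c := if i == j0 then a else 1.
have kop_g : kop (p i) (g i) = c *: g i.
  apply/eqP; rewrite -mem_eigsp /c; case: eqVneq => [-> //|neq_ij0]; apply: g_gt.
  by rewrite ltn_neqAle le_j0i andbT; apply: contra_neq neq_ij0 => /val_inj ->.
have sum_g j : (i < j)%N -> \sum_t g j t = #|X j|%:R * g j (x j).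
  move=> lt_ij; rewrite mulr_natl -sumr_const; apply: eq_bigr => t _.
  exact: eigsp1_const (p_stoch j) (p_irr j) (g_gt j (leq_ltn_trans le_j0i lt_ij)) t (x j).
have factor (j : 'I_n) : (if (j < i)%N then g j (x j)
    else if j == i then kop (p j) (g j) (x j) else \sum_t g j t) =
    (if (j < i)%N then 1 else if j == i then c else #|X j|%:R) * g j (x j).
  case: ltnP => [_|le_ij]; first by rewrite mul1r.
  case: eqVneq => [->|neq_ji]; first by rewrite kop_g ffunE.
  by rewrite sum_g // ltn_neqAle le_ij andbT eq_sym.
by rewrite /summand_tens (eq_bigr _ (fun j _ => factor j)) big_split /= prod_tail_size ffunE.
Qed.

Lemma kop_nested_tens_eigen : kop (nested_kernel p0 p) (tens g) =
  (p0 j0 * a + \sum_(i < n | (j0 < i)%N) p0 i) *: tens g.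
Proof.
apply/ffunP => x; rewrite kop_nested_tens ffunE.
have tail_neq0 i : tail_size i != 0.
  by apply/prodf_neq0 => j _; rewrite pnatr_eq0 -lt0n X_gt0.
have term i : p0 i / tail_size i * summand_tens g i x =
    ((i == j0)%:R * (p0 j0 * a) + (j0 < i)%:R * p0 i) * tens g x.
  have [lt_ij0|le_j0i] := ltnP i j0.
    have ne_ij0 : (i == j0) = false by rewrite -val_eqE ltn_eqF.
    rewrite summand_tens_lt // ne_ij0 (ltnNge j0 i) (ltnW lt_ij0) /=.
    by rewrite !mul0r mulr0 add0r mul0r.
  rewrite summand_tens_ge //; case: eqVneq => [->|ne_ij0].
    by rewrite ltnn mul1r mul0r addr0; field.
  have lt_j0i : (j0 < i)%N by rewrite ltn_neqAle le_j0i andbT eq_sym val_eqE.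
  by rewrite lt_j0i /= mul0r add0r !mul1r; field.
rewrite (eq_bigr _ (fun i _ => term i)) -big_distrl /= big_split /=.
congr (_ * _); congr (_ + _).
  by rewrite (bigD1 j0) //= eqxx mul1r big1 ?addr0 // => i /negPf ->; rewrite mul0r.
rewrite [RHS]big_mkcond /=; apply: eq_bigr => i _.
by case: ltnP; rewrite ?mul1r ?mul0r.
Qed.

End PureTensorEigen.

End NestedKernel.

Section Decomposition.
Local Unset Implicit Arguments.
Variables (R : realFieldType) (n : nat) (X : 'I_n -> finType).
Variables (p : forall i, X i -> X i -> R) (p0 : 'I_n -> R).
Variables (r : 'I_n -> nat) (lam : forall i, 'I_(r i).+1 -> R).

Hypothesis n_gt0 : (0 < n)%N.
Hypothesis p_stoch : forall i, stochastic (p i).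
Hypothesis p_irr : forall i, irreducible (p i).
Hypothesis p_sym : forall i : 'I_n, (0 < i)%N -> symmetric_kernel (p i).
Hypothesis lam_inj : forall i, injective (lam i).
Hypothesis lam0 : forall i, lam i ord0 = 1.
Hypothesis W_neq0 : forall i k, eigsp (p i) (lam i k) != 0%VS.
Hypothesis W_full : forall i, (\sum_(k < (r i).+1) eigsp (p i) (lam i k))%VS = fullv.

Local Set Implicit Arguments.

Local Notation index := {j : 'I_n & 'I_(r j).+1}.
Implicit Types (s : index) (i j : 'I_n).

Definition W i (k : 'I_(r i).+1) := eigsp (p i) (lam i k).
Arguments W : clear implicits.

(* Factor i is the paper's X_(i+1).  The block s = (j, k) is
   L(X_1) (x) ... (x) L(X_j) (x) W^(j+1)_k (x) W^(j+2)_0 (x) ... (x) W^n_0, so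
   j = n-1 is case (i), 0 < j < n-1 case (ii) and j = 0 case (iii); k = 0 is
   admissible only for j = 0.  In block_factor, inord casts k to the index type
   of factor i = j. *)
Definition admissible s :=
  (tag s == 0 :> nat) || (tagged s != ord0).

Definition block_factor s i :=
  if (i < tag s)%N then fullv
  else if (i == tag s :> nat) then eigsp (p i) (lam i (inord (tagged s)))
  else W i ord0.

Definition block s := tensv (block_factor s).

Definition block_value s :=
  p0 (tag s) * lam (tag s) (tagged s) + \sum_(i < n | (tag s < i)%N) p0 i.

Definition block_dim s :=
  ((\prod_(i < n | (i < tag s)%N) #|X i|) * \dim (W (tag s) (tagged s)))%N.

Lemma card_X_gt0 i : (0 < #|X i|)%N.
Proof. exact: card_gt0_vspace_neq0 (W_neq0 i ord0). Qed.

Lemma W0E i : W i ord0 = eigsp (p i) 1.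
Proof. by rewrite /W lam0. Qed.

Lemma dim_W0 i : \dim (W i ord0) = 1%N.
Proof. by rewrite W0E dim_eigsp1 ?card_X_gt0. Qed.

Lemma sum_dim_W i : (\sum_k \dim (W i k))%N = #|X i|.
Proof. by rewrite -(dim_L R) -(W_full i) (directvP (directv_eigsp _ (lam_inj i))). Qed.

Lemma sum_dim_W_admissible i :
  (\sum_(k | (i == 0 :> nat) || (k != ord0)) \dim (W i k))%N = (#|X i| - (i != 0 :> nat))%N.
Proof.
rewrite -sum_dim_W; case: posnP => _; first by rewrite subn0.
by rewrite (sum_neq_subn ord0); congr (_ - _)%N; rewrite dim_W0.
Qed.

Lemma block_factor_tag s : block_factor s (tag s) = W (tag s) (tagged s).
Proof. by rewrite /block_factor ltnn eqxx inord_val. Qed.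

Lemma block_factor_lt s i : (i < tag s)%N -> block_factor s i = fullv.
Proof. by rewrite /block_factor => ->. Qed.

Lemma block_factor_gt s i : (tag s < i)%N -> block_factor s i = eigsp (p i) 1.
Proof. by move=> lt_si; rewrite /block_factor ltnNge (ltnW lt_si) (gtn_eqF lt_si) W0E. Qed.

Lemma block_tens_eigen s (g : forall i, L R (X i)) :
  admissible s -> (forall i, g i \in block_factor s i) ->
  kop (nested_kernel p0 p) (tens g) = block_value s *: tens g.
Proof.
move=> adm_s g_s.
have g_tag : g (tag s) \in W (tag s) (tagged s) by rewrite -block_factor_tag.
apply: (kop_nested_tens_eigen _ _ _ p0 p g _ _ p_stoch p_irr card_X_gt0 g_tag).
  move=> tag_gt0; apply: sum_eigsp_eq0 (p_stoch _) (p_sym _ tag_gt0) _ g_tag.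
  rewrite -(lam0 (tag s)) (inj_eq (lam_inj _)); move: adm_s; rewrite /admissible.
  by case: eqP => [tag0|//]; rewrite tag0 in tag_gt0.
by move=> i lt_si; rewrite -(block_factor_gt lt_si).
Qed.

Lemma block_eigen s f : admissible s -> f \in block s ->
  kop (nested_kernel p0 p) f = block_value s *: f.
Proof.
move=> adm_s f_s; apply/eqP; rewrite -mem_eigsp; move: f f_s; apply/subvP.
apply/span_subvP => _ /mapP[t _ ->]; rewrite mem_eigsp; apply/eqP.
by apply: block_tens_eigen => // i; apply/vbasis_mem/mem_tnth.
Qed.

Lemma dim_block_factor s i : \dim (block_factor s i) =
  if (i < tag s)%N then #|X i| else if i == tag s then \dim (W (tag s) (tagged s)) else 1%N.
Proof.
case: ltngtP => [lt_is|lt_si|/val_inj eq_is].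
- by rewrite (block_factor_lt lt_is) dim_L.
- have ne_is : i != tag s by apply/eqP => eq_is; rewrite eq_is ltnn in lt_si.
  by rewrite (block_factor_gt lt_si) (negbTE ne_is) dim_eigsp1 ?card_X_gt0.
- by rewrite eq_is eqxx block_factor_tag.
Qed.

Lemma dim_block_leq s : (\dim (block s) <= block_dim s)%N.
Proof.
apply: leq_trans (dim_tensv_leq _) (eq_leq _).
by rewrite (eq_bigr _ (fun i _ => dim_block_factor s i)) prod_if_lt_eq.
Qed.

Lemma sum_block_dim : (\sum_(s | admissible s) block_dim s)%N = (\prod_i #|X i|)%N.
Proof.
rewrite -(@sum_prefix_prod_telescope n (fun i => #|X i|) card_X_gt0 n_gt0).
transitivity (\sum_(j : 'I_n) \sum_(k : 'I_(r j).+1 | (j == 0 :> nat) || (k != ord0))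
    (\prod_(i < n | (i < j)%N) #|X i|) * \dim (W j k))%N.
  by rewrite (sig_big_dep xpredT (fun j (k : 'I_(r j).+1) => (j == 0 :> nat) || (k != ord0))
    (fun j k => (\prod_(i < n | (i < j)%N) #|X i|) * \dim (W j k))%N).
by apply: eq_bigr => j _; rewrite -big_distrr sum_dim_W_admissible.
Qed.

Lemma block_factor_ord0 j i : (j <= i)%N ->
  block_factor (Tagged (fun j => 'I_(r j).+1) (ord0 : 'I_(r j).+1)) i = eigsp (p i) 1.
Proof.
rewrite leq_eqVlt => /orP[/eqP/val_inj <-|lt_ji]; last exact: block_factor_gt.
by rewrite block_factor_tag W0E.
Qed.

Let Sum := (\sum_(s | admissible s) block s)%VS.

(* Induction on J: the components of factor J in the W^J_k, k <> 0, lie in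
   the block (J, k); the component in W^J_0 is covered by the induction
   hypothesis. *)
Lemma tens_mem_blocks J : (J <= n)%N -> forall g : forall i, L R (X i),
  (forall i : 'I_n, (J <= i)%N -> g i \in eigsp (p i) 1) -> tens g \in Sum.
Proof.
have memSum s f : admissible s -> f \in block s -> f \in Sum.
  by move=> adm_s /(subvP (sumv_sup s adm_s (subvv _))).
elim: J => [|J IH] le_Jn g g1.
  pose j0 := Ordinal n_gt0.
  apply: (memSum (Tagged (fun j => 'I_(r j).+1) (ord0 : 'I_(r j0).+1))) => //.
  by apply: memv_tens => i; rewrite block_factor_ord0 ?g1.
pose jJ := Ordinal le_Jn.
have /memv_sumP[w w_W g_eq] : g jJ \in (\sum_k W jJ k)%VS by rewrite W_full memvf.
rewrite (tens_sum_factor g_eq); apply: rpred_sum => k _.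
have [k0|nz_k] := eqVneq k ord0.
  apply: IH => [|i le_Ji]; first exact: ltnW.
  have [<-|ne_i] := eqVneq jJ i; first by rewrite dfwith_in -W0E -k0 w_W.
  rewrite dfwith_out // g1 // ltn_neqAle le_Ji andbT.
  by apply: contra_neq ne_i => eq_Ji; apply: val_inj.
apply: (memSum (Tagged (fun j => 'I_(r j).+1) k)); first by rewrite /admissible nz_k orbT.
apply: memv_tens => i; have [<-|ne_i] := eqVneq jJ i.
  by rewrite dfwith_in block_factor_tag w_W.
rewrite dfwith_out //; case: (ltngtP i J) => [lt_iJ|lt_Ji|eq_iJ].
- by rewrite block_factor_lt ?memvf.
- by rewrite block_factor_gt ?g1.
- by case/eqP: ne_i; apply: val_inj.
Qed.

Lemma sum_blocks_full : Sum = fullv.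
Proof.
apply/eqP; rewrite eqEsubv subvf /=; apply/subvP => f _.
rewrite [f]tens_delta_expansion; apply: rpred_sum => x _; apply: rpredZ.
by apply: (tens_mem_blocks (leqnn n)) => i; rewrite leqNgt ltn_ord.
Qed.

End Decomposition.

Theorem proposition6p1 (R : realFieldType) (n : nat) (X : 'I_n -> finType)
    (p : forall i : 'I_n, X i -> X i -> R) (p0 : 'I_n -> R)
    (r : 'I_n -> nat) (lam : forall i : 'I_n, 'I_(r i).+1 -> R) :
  (2 <= n)%N ->
  (forall i, stochastic (p i)) ->
  (forall i, irreducible (p i)) ->
  (forall i, reversible_pos (p i)) ->
  (forall i : 'I_n, (0 < i)%N -> symmetric_kernel (p i)) ->
  (forall i, 0 < p0 i) -> \sum_i p0 i = 1 ->
  (* L(X_i) = (+)_{k=0}^{r_i} W^i_k is the eigenspace decomposition of P_i: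
     the lam i k are pairwise distinct eigenvalues, lam i 0 = 1, and the
     eigenspaces W^i_k = eigsp (p i) (lam i k) span L(X_i) *)
  (forall i, injective (lam i)) ->
  (forall i, lam i ord0 = 1) ->
  (forall i k, eigsp (p i) (lam i k) != 0%VS) ->
  (forall i, (\sum_(k < (r i).+1) eigsp (p i) (lam i k))%VS = fullv) ->
  let W i k := eigsp (p i) (lam i k) in
  let ok (s : {j : 'I_n & 'I_(r j).+1}) := (tag s == 0 :> nat) || (tagged s != ord0) in
  let block (s : {j : 'I_n & 'I_(r j).+1}) :=
    tensv (fun i : 'I_n =>
      if (i < tag s)%N then fullv
      else if (i == tag s :> nat) then eigsp (p i) (lam i (inord (tagged s)))
      else W i ord0) in
  let mu (s : {j : 'I_n & 'I_(r j).+1}) :=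
    p0 (tag s) * lam (tag s) (tagged s) + \sum_(i < n | (tag s < i)%N) p0 i in
  let PP := kop (nested_kernel p0 p) in
  (forall s, ok s -> forall f, f \in block s -> PP f = mu s *: f) /\
  (forall s, ok s ->
     \dim (block s) = ((\prod_(i < n | (i < tag s)%N) #|X i|) * \dim (W (tag s) (tagged s)))%N) /\
  directv (\sum_(s | ok s) block s) /\
  (\sum_(s | ok s) block s)%VS = fullv.
Proof.
move=> n_ge2 p_stoch p_irr _ p_sym _ _ lam_inj lam0 W_neq0 W_full W ok block mu PP.
have n_gt0 : (0 < n)%N := ltnW n_ge2.
have full := sum_blocks_full n_gt0 lam0 W_full.
have sum_dim := sum_block_dim n_gt0 p_stoch p_irr lam_inj lam0 W_neq0 W_full.
have [direct dim_eq] := directv_sum_dim_bound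
  (fun s _ => dim_block_leq p_stoch p_irr lam0 W_neq0 s) full
  (etrans sum_dim (esym (dim_L_prodX R X))).
split=> [s ok_s f f_s|//].
exact (block_eigen p0 p_stoch p_irr p_sym lam_inj lam0 W_neq0 ok_s f_s).
Qed.
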